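(* Let $\alpha_H$ be the harmonic partition and let $\mathcal L^{(\alpha_H)}_n$ and $\mathcal L_n$ be the sum-level sets of the alternating and the classical Lüroth maps, as in the context. Then \[\lim_{n\to\infty}\lambda(\mathcal L^{(\alpha_H)}_n)=\lim_{n\to\infty}\lambda(\mathcal L_n)=0.\]
   Context: $\lambda$ is Lebesgue measure on $\mathcal U=[0,1]$. The harmonic partition $\alpha_H=\{A_n\}$ has $A_n=(1/(n+1),1/n]$, so $a_n=1/(n(n+1))$, $t_n=1/n$. The alternating Lüroth map is $L_{\alpha_H}(x)=-n(n+1)x+(n+1)$ for $x\in A_n$, $L_{\alpha_H}(0)=0$; its cylinders are $C(\ell_1,\dots,\ell_k)=\{x: L_{\alpha_H}^{i-1}(x)\in A_{\ell_i},\ i=1,\dots,k\}$ and $\mathcal L^{(\alpha_H)}_n$ is the union of all $C(\ell_1,\dots,\ell_k)$, $k\in\mathbb N$, with $\sum_i\ell_i=n$. The classical Lüroth map is $L(x)=n(n+1)x-n$ for $x\in[1/(n+1),1/n)$, $n\ge2$, $L(x)=2x-1$ for $x\in[1/2,1]$, $L(0)=0$; with digit intervals $B_1=[1/2,1]$, $B_n=[1/(n+1),1/n)$ for $n\ge2$, its cylinders are $\{x:L^{i-1}(x)\in B_{\ell_i},\ i=1,\dots,k\}$ and $\mathcal L_n$ is the union of those cylinders with $\sum_i\ell_i=n$. *)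

From HB Require Import structures.
From mathcomp Require Import all_boot all_order all_algebra.
From mathcomp Require Import all_classical all_reals all_analysis.
Set Implicit Arguments. Unset Strict Implicit. Unset Printing Implicit Defensive.
Import Order.TTheory GRing.Theory Num.Theory.
Local Open Scope classical_set_scope.
Local Open Scope ring_scope.

Section Luroth.
Variable R : realType.

Definition harmA (n : nat) : set R :=
  [set x | (0 < n)%N /\ 1 / (n.+1)%:R < x /\ x <= 1 / n%:R].

Definition lurB (n : nat) : set R :=
  if n == 1%N then [set x | 1 / 2 <= x /\ x <= 1]
  else [set x | (1 < n)%N /\ 1 / (n.+1)%:R <= x /\ x < 1 / n%:R].

(* The digit of x: the (unique) n with x in the n-th interval, 0 if none. *)
Definition harm_digit (x : R) : nat := xget 0%N [set n | harmA n x].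
Definition lur_digit (x : R) : nat := xget 0%N [set n | lurB n x].

Definition altL (x : R) : R :=
  let n := harm_digit x in
  if n == 0%N then 0 else - ((n * n.+1)%:R * x) + n.+1%:R.

Definition clL (x : R) : R :=
  let n := lur_digit x in
  if n == 0%N then 0 else (n * n.+1)%:R * x - n%:R.

Definition cylinder (T : R -> R) (I : nat -> set R) (l : seq nat) : set R :=
  [set x | forall i, (i < size l)%N -> I (nth 0%N l i) (iter i T x)].

Definition sum_level (T : R -> R) (I : nat -> set R) (n : nat) : set R :=
  \bigcup_(l in [set l : seq nat | (0 < size l)%N /\ all (fun a => 0 < a)%N l
                                   /\ sumn l = n]) cylinder T I l.

Definition altSumLevel (n : nat) : set R := sum_level altL harmA n.
Definition clSumLevel (n : nat) : set R := sum_level clL lurB n.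

End Luroth.

From HB Require Import structures.
From mathcomp Require Import all_boot all_order all_algebra.
From mathcomp Require Import all_classical all_reals all_analysis.
From mathcomp Require Import ring lra zify.
Set Implicit Arguments. Unset Strict Implicit. Unset Printing Implicit Defensive.
Import Order.TTheory GRing.Theory Num.Theory numFieldNormedType.Exports.
Local Open Scope classical_set_scope.
Local Open Scope ring_scope.

(* On its k-th digit interval each of the two maps is affine with slope
   +-k(k+1), so the cylinder C(l_1, ..., l_m) lies in an interval of length
   p(l_1) ... p(l_m), where p(k) = 1/(k(k+1)).  The sum-level set of level n is
   therefore bounded by the renewal sequence u_n of the weights p, the sum of
   these products over all compositions of n.  The tails of p are
   r(k) = 1/(k+1), which gives sum_(j <= n) r(n - j) u_j = 1; since r is
   log-convex, Kaluza's lemma makes u nonincreasing, so u_n <= 1/H_(n+1),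
   which tends to 0 because the harmonic series diverges. *)

Fixpoint compositions_fuel (f n : nat) : seq (seq nat) :=
  if n is 0 then [:: [::]] else
  if f is f'.+1 then
    flatten [seq [seq (n - j)%N :: l | l <- compositions_fuel f' j] | j <- iota 0 n]
  else [::].

(* The fuel [n] suffices: every part of a composition of [n] is at least 1. *)
Definition compositions (n : nat) : seq (seq nat) := compositions_fuel n n.

Lemma compositions_fuelS f n : compositions_fuel f.+1 n.+1 =
  flatten [seq [seq (n.+1 - j)%N :: l | l <- compositions_fuel f j] | j <- iota 0 n.+1].
Proof. by []. Qed.

Lemma compositions_fuel_stable f g n : (n <= f)%N -> (n <= g)%N ->
  compositions_fuel f n = compositions_fuel g n.
Proof.
elim: f g n => [|f IH] [|g] [|n] nf ng //; rewrite /= ?ltn0 // in nf ng.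
rewrite !compositions_fuelS; congr flatten.
apply/eq_in_map => j; rewrite mem_iota add0n /= => jn.
by congr map; apply: IH; rewrite -ltnS (leq_trans jn).
Qed.

Lemma compositionsS n : compositions n.+1 =
  flatten [seq [seq (n.+1 - j)%N :: l | l <- compositions j] | j <- iota 0 n.+1].
Proof.
rewrite /compositions compositions_fuelS; congr flatten.
apply/eq_in_map => j; rewrite mem_iota add0n /= ltnS => jn.
by congr map; apply: compositions_fuel_stable.
Qed.

Lemma mem_compositions n l :
  (l \in compositions n) = all (fun a => 0 < a)%N l && (sumn l == n).
Proof.
elim/ltn_ind: n l => -[_ [|k l]|n IH l] //=.
  by rewrite inE /= addn_eq0; case: k => [|k] /=; rewrite ?andbF.
rewrite compositionsS; apply/flatten_mapP/idP => [[j]|].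
  rewrite mem_iota add0n /= => jn /mapP[l' l'j ->] /=.
  rewrite IH // in l'j; case/andP: l'j => -> /eqP ->.
  by rewrite subn_gt0 jn subnK ?eqxx // ltnW.
case: l => [|k l] // /andP[/andP[k0 l0] /eqP kl].
have {}kl : (k + sumn l = n.+1)%N := kl.
have ln : (sumn l < n.+1)%N by rewrite -kl -{1}(add0n (sumn l)) ltn_add2r.
exists (sumn l); first by rewrite mem_iota add0n ln.
rewrite -kl addnK; apply: map_f.
by rewrite IH // eqxx andbT.
Qed.

Section Renewal.
Variables (R : pzSemiRingType) (w : nat -> R).

Definition renewal (n : nat) : R :=
  \sum_(l <- compositions n) \prod_(k <- l) w k.

Lemma renewal0 : renewal 0 = 1.
Proof. by rewrite /renewal /compositions /= big_seq1 big_nil. Qed.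

Lemma renewalS n :
  renewal n.+1 = \sum_(j < n.+1) w (n.+1 - j) * renewal j.
Proof.
rewrite -(big_mkord xpredT (fun j => w (n.+1 - j) * renewal j)).
rewrite /renewal compositionsS big_flatten big_map /index_iota subn0.
apply: eq_bigr => j _; rewrite big_map mulr_sumr.
by apply: eq_bigr => l _; rewrite big_cons.
Qed.

End Renewal.

Section RenewalTail.
Variables (R : pzRingType) (w r : nat -> R).
Hypotheses (r0 : r 0 = 1) (w_tail : forall k, w k.+1 = r k - r k.+1).

Lemma renewal_tail_conv n : \sum_(j < n.+1) r (n - j)%N * renewal w j = 1.
Proof.
elim: n => [|n IH]; first by rewrite big_ord1 r0 renewal0 mul1r.
rewrite big_ord_recr /= subnn r0 mul1r renewalS -IH -big_split /=.
apply: eq_bigr => i _; have i_le_n : (i <= n)%N by rewrite -ltnS.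
by rewrite subSn // w_tail mulrBl addrC subrK.
Qed.

End RenewalTail.

(* Kaluza's lemma: if [r] is positive and log-convex, the power series
   inverse to [sum_k r k X^k] has nonpositive coefficients beyond the first. *)
Lemma kaluza (R : realFieldType) (r b : nat -> R) :
  (forall k, 0 < r k) ->
  {homo (fun k => r k.+1 / r k) : i j / (i <= j)%N >-> i <= j} ->
  (forall n, \sum_(j < n.+1) r (n - j)%N * b j = (n == 0)%:R) ->
  forall n, (0 < n)%N -> b n <= 0.
Proof.
move=> r_gt0 ratio_homo conv.
have b0_gt0 : 0 < b 0.
  by have := conv 0; rewrite big_ord1 => rb0; rewrite -(pmulr_rgt0 _ (r_gt0 0)) rb0.
have coef_le0 k m : (k <= m)%N -> r k.+1 - r m.+1 / r m * r k <= 0.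
  move=> km; rewrite subr_le0 -{1}(divfK (lt0r_neq0 (r_gt0 k)) (r k.+1)).
  by apply: ler_wpM2r; [exact: ltW | exact: ratio_homo].
elim/ltn_ind => -[//|[_ _|m IH _]].
  have : r 1 * b 0 + r 0 * b 1 = 0.
    by have := conv 1; rewrite 2!big_ord_recl big_ord0 addr0.
  have := r_gt0 0; have := r_gt0 1; nra.
set c := r m.+2 / r m.+1.
have conv_m : \sum_(j < m.+2) r (m.+1 - j)%N * b j = 0 := conv m.+1.
have : r 0 * b m.+2 = - \sum_(j < m.+2) (r (m.+2 - j)%N - c * r (m.+1 - j)%N) * b j.
  have := conv m.+2; rewrite big_ord_recr /= subnn => /eqP; rewrite addrC addr_eq0 => /eqP ->.
  rewrite [in RHS](eq_bigr (fun j : 'I_m.+2 =>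
    r (m.+2 - j)%N * b j - c * (r (m.+1 - j)%N * b j))); last first.
    by move=> j _; rewrite mulrBl mulrA.
  by rewrite sumrB -mulr_sumr conv_m mulr0 subr0.
rewrite -(pmulr_rle0 _ (r_gt0 0)) => ->; rewrite oppr_le0.
apply: sumr_ge0 => -[[|j] j_lt] _ /=.
  by rewrite subn0 /c divfK ?lt0r_neq0 // subrr mul0r.
have j_le_m : (j <= m)%N by rewrite -ltnS.
rewrite !subSS subSn //; apply: mulr_le0; last exact: IH.
exact: coef_le0 (leq_trans (leq_subr _ _) _).
Qed.

Section RenewalDecay.
Variables (R : realType) (w r : nat -> R).
Hypotheses (w_ge0 : forall k, 0 <= w k) (r0 : r 0 = 1)
  (w_tail : forall k, w k.+1 = r k - r k.+1) (r_gt0 : forall k, 0 < r k)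
  (r_ratio_homo : {homo (fun k => r k.+1 / r k) : i j / (i <= j)%N >-> i <= j}).

Lemma renewal_ge0 n : 0 <= renewal w n.
Proof. by apply: sumr_ge0 => l _; apply: prodr_ge0 => k _. Qed.

Lemma renewal_nonincreasing : {homo renewal w : m n / (m <= n)%N >-> n <= m}.
Proof.
apply/nonincreasing_seqP => n; rewrite -subr_le0.
pose b j := renewal w j - (if j is j'.+1 then renewal w j' else 0).
apply: (@kaluza _ r b r_gt0 r_ratio_homo _ n.+1) => // -[|m].
  by rewrite big_ord1 subn0 r0 /b /= (renewal0 w) subr0 mul1r.
have conv_m := renewal_tail_conv r0 w_tail m.
have conv_Sm : r m.+1 + \sum_(j < m.+1) r (m - j)%N * renewal w j.+1 = 1.
  rewrite -(renewal_tail_conv r0 w_tail m.+1) [RHS]big_ord_recl subn0 (renewal0 w) mulr1.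
  by congr (_ + _); apply: eq_bigr => j _; rewrite lift0.
rewrite big_ord_recl subn0 /b /= (renewal0 w) subr0 mulr1.
rewrite (eq_bigr (fun j : 'I_m.+1 => r (m - j)%N * renewal w j.+1 - r (m - j)%N * renewal w j)).
  by rewrite sumrB conv_m addrA conv_Sm subrr.
by move=> j _; rewrite /bump leq0n add1n add0n subSS mulrBr.
Qed.

Lemma series_gt0 n : 0 < series r n.+1.
Proof.
rewrite /series /= big_nat_recl // ltr_pwDl //.
by apply: sumr_ge0 => k _; apply: ltW.
Qed.

Lemma renewal_le_inv_series n : renewal w n <= (series r n.+1)^-1.
Proof.
rewrite -[_^-1]mul1r ler_pdivlMr ?series_gt0 // -(renewal_tail_conv r0 w_tail n).
rewrite /series /= big_mkord mulr_sumr (reindex_inj rev_ord_inj) /=.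
apply: ler_sum => i _; rewrite subSS mulrC.
apply: ler_wpM2l; first exact: ltW.
by apply: renewal_nonincreasing; rewrite -ltnS.
Qed.

Hypothesis r_series : series r @ \oo --> +oo.

Lemma renewal_cvg0 : renewal w @ \oo --> 0.
Proof.
have inv_cvg0 : (fun n => (series r n.+1)^-1) @ \oo --> 0.
  apply/gtr0_cvgV0; last by rewrite cvg_shiftS.
  exact: nearW series_gt0.
apply: (squeeze_cvgr _ (cvg_cst 0) inv_cvg0).
by apply: nearW => n; rewrite renewal_ge0 renewal_le_inv_series.
Qed.

End RenewalDecay.

Definition luroth_weight {R : fieldType} (k : nat) : R := ((k * k.+1)%:R)^-1.

Section LurothWeight.
Variable R : realType.

Lemma luroth_weight_ge0 k : 0 <= luroth_weight k :> R.
Proof. by rewrite invr_ge0 ler0n. Qed.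

Lemma luroth_weight_tail k :
  luroth_weight k.+1 = harmonic k - harmonic k.+1 :> R.
Proof.
rewrite /luroth_weight /harmonic /= natrM -[k.+2%:R]natr1.
by field; rewrite -!(addrC 1) !nat1r !pnatr_eq0.
Qed.

Lemma harmonic_ratio_homo :
  {homo (fun k => harmonic k.+1 / harmonic k : R) : i j / (i <= j)%N >-> i <= j}.
Proof.
apply/nondecreasing_seqP => k; rewrite /harmonic /= !invrK mulrC.
rewrite ler_pdivrMr ?ltr0n // -mulrA mulrC ler_pdivlMr ?ltr0n // -!natrM ler_nat.
nia.
Qed.

Lemma series_harmonic_pinfty : series (@harmonic R) @ \oo --> +oo.
Proof.
apply: nondecreasing_dvgn_lt (@dvg_harmonic R).
by apply: nondecreasing_series => n _ _; apply: ltW (harmonic_gt0 _).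
Qed.

Lemma renewal_luroth_cvg0 : renewal (@luroth_weight R) @ \oo --> 0.
Proof.
apply: (renewal_cvg0 luroth_weight_ge0 _ luroth_weight_tail harmonic_gt0
  harmonic_ratio_homo series_harmonic_pinfty).
by rewrite /harmonic /= invr1.
Qed.

End LurothWeight.

Lemma affine_preimage_itv (R : realFieldType) (c s a d : R) : s != 0 ->
  exists a', forall x, a <= c + s * x <= a + d -> a' <= x <= a' + d / `|s|.
Proof.
rewrite neq_lt => /orP[s_lt0|s_gt0].
  exists ((a + d - c) / s) => x /andP[lo hi].
  have e1 : (a + d - c) / s * s = a + d - c by rewrite divfK ?ltr0_neq0.
  have e2 : d / `|s| * s = - d by rewrite ltr0_norm // invrN mulrN mulNr divfK ?ltr0_neq0.
  apply/andP; split; nra.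
exists ((a - c) / s) => x /andP[lo hi].
have e1 : (a - c) / s * s = a - c by rewrite divfK // lt0r_neq0.
have e2 : d / `|s| * s = d by rewrite gtr0_norm // divfK // lt0r_neq0.
apply/andP; split; nra.
Qed.

Lemma outer_measure_bigsetU (T : Type) (R : realType)
    (mu : {outer_measure set T -> \bar R}) (I : Type) (s : seq I) (F : I -> set T) :
  (mu (\big[setU/set0]_(i <- s) F i) <= \sum_(i <- s) mu (F i))%E.
Proof.
elim: s => [|i s IH]; first by rewrite !big_nil outer_measure0.
by rewrite !big_cons; apply: le_trans (outer_measureU2 _ _ _) (leeD _ IH).
Qed.

Lemma lebesgue_measure_itv_le (R : realType) (a d : R) : 0 <= d ->
  (lebesgue_measure [set` `[a, (a + d)%R]] <= d%:E)%E.
Proof.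
move=> d_ge0; rewrite lebesgue_measure_itv /=.
by case: ifP => _; rewrite ?lee_fin // addrAC subrr add0r.
Qed.

Section Cylinders.
Variables (R : realType) (T : R -> R) (I : nat -> set R).
Hypotheses (I_sub01 : forall k x, I k x -> 0 <= x <= 1)
  (T_sub01 : forall k x, I k x -> 0 <= T x <= 1)
  (T_affine : forall k, (0 < k)%N -> exists c s,
     `|s| = (k * k.+1)%:R /\ forall x, I k x -> T x = c + s * x).

Lemma cylinder_cons k l : cylinder T I (k :: l) = I k `&` T @^-1` cylinder T I l.
Proof.
apply/seteqP; split => x.
  move=> cx; split; first exact: (cx 0%N).
  by move=> i il; rewrite /= -iterSr; exact: (cx i.+1).
by move=> [Ikx cTx] [|i] //= il; rewrite -iterS iterSr; exact: cTx.
Qed.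

Lemma cylinder_sub_itv l : all (fun a => 0 < a)%N l -> exists a,
  cylinder T I l `&` [set` `[0, 1]] `<=`
    [set` `[a, a + \prod_(k <- l) luroth_weight k]].
Proof.
elim: l => [_|k l IH /andP[k_gt0 /IH [a cyl_sub]]].
  by exists 0; rewrite big_nil add0r => x [].
have [c [s [s_abs T_eq]]] := T_affine k_gt0.
have s_neq0 : s != 0 by rewrite -normr_eq0 s_abs pnatr_eq0 muln_eq0 negb_or -!lt0n k_gt0.
have [a' a'_sub] := affine_preimage_itv c a (\prod_(j <- l) luroth_weight j) s_neq0.
exists a'; rewrite big_cons mulrC /luroth_weight -s_abs => x.
rewrite cylinder_cons => -[[Ikx cTx] _].
have : [set` `[a, a + \prod_(j <- l) luroth_weight j]] (T x).
  by apply: cyl_sub; split=> //=; rewrite in_itv /= (T_sub01 Ikx).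
by rewrite /= in_itv /= T_eq // => /a'_sub; rewrite in_itv.
Qed.

Lemma lebesgue_cylinder_le k l : all (fun a => 0 < a)%N (k :: l) ->
  (lebesgue_measure (cylinder T I (k :: l)) <=
    (\prod_(j <- k :: l) luroth_weight j)%:E)%E.
Proof.
move=> pos; have [a cyl_sub] := cylinder_sub_itv pos.
apply: le_trans (lebesgue_measure_itv_le _ _); last first.
  by apply: prodr_ge0 => j _; apply: luroth_weight_ge0.
apply: le_outer_measure => x cx; apply: cyl_sub; split=> //=.
by rewrite in_itv /=; move: cx; rewrite cylinder_cons => -[/I_sub01].
Qed.

Lemma sum_level_sub n :
  sum_level T I n `<=` \big[setU/set0]_(l <- compositions n) cylinder T I l.
Proof.
move=> x [l [_ [pos sumn_l]] cx].
have l_in : l \in compositions n by rewrite mem_compositions pos sumn_l eqxx.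
by rewrite (perm_big _ (perm_to_rem l_in)) big_cons; left.
Qed.

(* Level 0 is excluded: there the empty composition would contribute [setT]. *)
Lemma lebesgue_sum_level_le n :
  (lebesgue_measure (sum_level T I n.+1) <= (renewal luroth_weight n.+1)%:E)%E.
Proof.
apply: le_trans (le_outer_measure lebesgue_measure _ _ (@sum_level_sub n.+1)) _.
apply: le_trans (outer_measure_bigsetU lebesgue_measure _ _) _.
rewrite /renewal -sumEFin big_seq [in X in (_ <= X)%E]big_seq.
apply: lee_sum => -[|k l]; rewrite mem_compositions => /andP[pos /eqP] //.
by move=> _; exact: lebesgue_cylinder_le.
Qed.

Lemma lebesgue_sum_level_cvg0 :
  (fun n => lebesgue_measure (sum_level T I n)) @ \oo --> 0%E.
Proof.
rewrite -cvg_shiftS.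
apply: (squeeze_cvge _ (cvg_cst 0%E) (h := fun n => (renewal luroth_weight n.+1)%:E)).
  by apply: nearW => n; rewrite measure_ge0 lebesgue_sum_level_le.
apply: cvg_EFin; first exact: nearW.
by rewrite cvg_shiftS; exact: renewal_luroth_cvg0.
Qed.

End Cylinders.

Section AlternatingLuroth.
Variable R : realType.

Lemma harmA_bounds k (x : R) : harmA k x ->
  [/\ (0 < k)%N, 1 < x * k.+1%:R & x * k%:R <= 1].
Proof.
move=> [k_gt0 [lo hi]]; split => //.
  by rewrite -ltr_pdivrMr // ltr0n.
by rewrite -ler_pdivlMr // ltr0n.
Qed.

Lemma harm_digitE k (x : R) : harmA k x -> harm_digit x = k.
Proof.
move=> hk; apply: xget_unique => // m hm.
have [m_gt0 m_lo m_hi] := harmA_bounds hm; have [k_gt0 k_lo k_hi] := harmA_bounds hk.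
have x_gt0 : 0 < x by nra.
apply/eqP; rewrite eqn_leq; apply/andP; split; rewrite leqNgt; apply/negP => lt.
  have : k.+1%:R <= m%:R :> R by rewrite ler_nat.
  nra.
have : m.+1%:R <= k%:R :> R by rewrite ler_nat.
nra.
Qed.

Lemma altLE k (x : R) : harmA k x -> altL x = k.+1%:R - (k * k.+1)%:R * x.
Proof.
move=> hk; have [k_gt0 _ _] := harmA_bounds hk.
by rewrite /altL (harm_digitE hk) -[k]prednK //= addrC.
Qed.

Lemma harmA_sub01 k (x : R) : harmA k x -> 0 <= x <= 1.
Proof.
move=> hk; have [k_gt0 lo hi] := harmA_bounds hk.
have k_ge1 : 1 <= k%:R :> R by rewrite ler1n.
rewrite -natr1 in lo; apply/andP; split; nra.
Qed.

Lemma altL_sub01 k (x : R) : harmA k x -> 0 <= altL x <= 1.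
Proof.
move=> hk; have [k_gt0 lo hi] := harmA_bounds hk.
have k_ge1 : 1 <= k%:R :> R by rewrite ler1n.
rewrite (altLE hk) natrM -natr1 in lo *; apply/andP; split; nra.
Qed.

Lemma altL_affine k : (0 < k)%N -> exists c s,
  `|s| = (k * k.+1)%:R /\ forall x : R, harmA k x -> altL x = c + s * x.
Proof.
move=> _; exists k.+1%:R, (- (k * k.+1)%:R); split; first by rewrite normrN normr_nat.
by move=> x hk; rewrite (altLE hk) mulNr.
Qed.

End AlternatingLuroth.

Section ClassicalLuroth.
Variable R : realType.

Lemma lurB_bounds k (x : R) : lurB k x ->
  [/\ (0 < k)%N, 1 <= x * k.+1%:R, x * k%:R <= 1 & (1 < k)%N -> x * k%:R < 1].
Proof.
rewrite /lurB; case: eqP => [-> [lo hi]|_ [k_gt1 [lo hi]]].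
  by split => //; lra.
have k_gt0 : (0 < k)%N by apply: ltnW.
split => //.
- by rewrite -ler_pdivrMr // ltr0n.
- by rewrite -ler_pdivlMr ?ltW // ltr0n.
- by rewrite -ltr_pdivlMr // ltr0n.
Qed.

Lemma lur_digitE k (x : R) : lurB k x -> lur_digit x = k.
Proof.
move=> hk; apply: xget_unique => // m hm.
have [m_gt0 m_lo m_hi m_lt] := lurB_bounds hm.
have [k_gt0 k_lo k_hi k_lt] := lurB_bounds hk.
have x_gt0 : 0 < x by have := ler0n R m.+1; nra.
apply/eqP; rewrite eqn_leq; apply/andP; split; rewrite leqNgt; apply/negP => lt.
  have : k.+1%:R <= m%:R :> R by rewrite ler_nat.
  have := m_lt (leq_ltn_trans k_gt0 lt); nra.
have : m.+1%:R <= k%:R :> R by rewrite ler_nat.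
have := k_lt (leq_ltn_trans m_gt0 lt); nra.
Qed.

Lemma clLE k (x : R) : lurB k x -> clL x = - k%:R + (k * k.+1)%:R * x.
Proof.
move=> hk; have [k_gt0 _ _ _] := lurB_bounds hk.
by rewrite /clL (lur_digitE hk) -[k]prednK //= addrC.
Qed.

Lemma lurB_sub01 k (x : R) : lurB k x -> 0 <= x <= 1.
Proof.
move=> hk; have [k_gt0 lo hi _] := lurB_bounds hk.
have k_ge1 : 1 <= k%:R :> R by rewrite ler1n.
rewrite -natr1 in lo; apply/andP; split; nra.
Qed.

Lemma clL_sub01 k (x : R) : lurB k x -> 0 <= clL x <= 1.
Proof.
move=> hk; have [k_gt0 lo hi _] := lurB_bounds hk.
have k_ge1 : 1 <= k%:R :> R by rewrite ler1n.
rewrite (clLE hk) natrM -natr1 in lo *; apply/andP; split; nra.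
Qed.

Lemma clL_affine k : (0 < k)%N -> exists c s,
  `|s| = (k * k.+1)%:R /\ forall x : R, lurB k x -> clL x = c + s * x.
Proof.
move=> _; exists (- k%:R), (k * k.+1)%:R; split; first by rewrite normr_nat.
by move=> x hk; rewrite (clLE hk).
Qed.

End ClassicalLuroth.

Theorem corollary5p1 (R : realType) :
  (fun n : nat => (@lebesgue_measure R) (@altSumLevel R n)) @ \oo --> 0%E /\
  (fun n : nat => (@lebesgue_measure R) (@clSumLevel R n)) @ \oo --> 0%E.
Proof.
split; apply: lebesgue_sum_level_cvg0.
- exact: harmA_sub01.
- exact: altL_sub01.
- exact: altL_affine.
- exact: lurB_sub01.
- exact: clL_sub01.
- exact: clL_affine.
Qed.
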